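(* Let $\{G_n\}_{n\ge1}$ be a sequence of graphs with $|V(G_n)|\to\infty$ and $N(H,G_n)>0$ for all $n$, let $H$ be a fixed connected graph, and let $p_n\in(0,1)$ satisfy $\limsup_{n\to\infty}p_n<1$. Then the Horvitz–Thompson estimator $\hat N(H,G_n)$ is consistent for $N(H,G_n)$, i.e. $\hat N(H,G_n)/N(H,G_n)\to1$ in probability, if and only if for every $\varepsilon>0$, $$\lim_{n\to\infty}\frac{1}{N(H,G_n)}\sum_{\substack{A\subset V(G_n)\\ 1\le|A|\le|V(H)|}} t_H(A)\,\mathbf 1\{t_H(A)>\varepsilon\, p_n^{|A|}N(H,G_n)\}=0.$$
   Context: $G_n$ is a simple, labeled, undirected graph with vertex set $V(G_n)=\{1,\dots,|V(G_n)|\}$ and adjacency matrix $(a_{ij})$. $H=(V(H),E(H))$ is a fixed connected graph with $V(H)=\{1,\dots,|V(H)|\}$, and $|Aut(H)|$ is the number of its automorphisms. For $k\ge1$, $V(G_n)_k$ denotes the set of $k$-tuples $\mathbf s=(s_1,\dots,s_k)$ of distinct vertices of $G_n$, and $\bar{\mathbf s}$ the set of entries of $\mathbf s$. For $\mathbf s\in V(G_n)_{|V(H)|}$ let $M_H(\mathbf s)=\prod_{(i,j)\in E(H)}a_{s_is_j}$, and $N(H,G_n)=\frac1{|Aut(H)|}\sum_{\mathbf s\in V(G_n)_{|V(H)|}}M_H(\mathbf s)$ (the number of copies of $H$ in $G_n$). Subgraph sampling: $\{X_v\}_{v\in V(G_n)}$ are i.i.d. Bernoulli$(p_n)$, $X_{\mathbf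 s}=\prod_{u=1}^{|V(H)|}X_{s_u}$, $T(H,G_n)=\frac1{|Aut(H)|}\sum_{\mathbf s\in V(G_n)_{|V(H)|}}M_H(\mathbf s)X_{\mathbf s}$, and $\hat N(H,G_n)=p_n^{-|V(H)|}T(H,G_n)$. For $A\subset V(G_n)$ with $|A|\le|V(H)|$, the local count is $t_H(A)=\frac1{|Aut(H)|}\sum_{\mathbf s\in V(G_n)_{|V(H)|}:\,\bar{\mathbf s}\supseteq A}M_H(\mathbf s)$. *)

From HB Require Import structures.
From mathcomp Require Import all_boot all_order all_algebra all_fingroup.
From mathcomp Require Import all_classical all_reals all_analysis.
Set Implicit Arguments. Unset Strict Implicit. Unset Printing Implicit Defensive.
Import Order.TTheory GRing.Theory Num.Theory.
Local Open Scope ring_scope.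

(* A simple labelled graph on vertex set 'I_m (vertices 1..m shifted to 0..m-1)
   is a symmetric irreflexive boolean relation. *)
Definition simple_graph (m : nat) (e : rel 'I_m) : Prop :=
  symmetric e /\ irreflexive e.

Definition connected_graph (k : nat) (e : rel 'I_k) : Prop :=
  forall x y : 'I_k, connect e x y.

Section Defs.
Variable R : realType.

Definition adj (m : nat) (G : rel 'I_m) (i j : 'I_m) : R := (G i j)%:R.

Definition nAut (k : nat) (EH : rel 'I_k) : nat :=
  #|[set s : {perm 'I_k} | [forall i, forall j, EH (s i) (s j) == EH i j]]|.

(* M_H(s) = prod_{(i,j) in E(H)} a_{s_i s_j}; each (unordered) edge once, i < j *)
Definition MH (k m : nat) (EH : rel 'I_k) (G : rel 'I_m) (s : {ffun 'I_k -> 'I_m}) : R :=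
  \prod_(i : 'I_k) \prod_(j : 'I_k | (i < j)%N && EH i j) adj G (s i) (s j).

(* N(H,G): tuples of distinct vertices = injective maps 'I_k -> 'I_m *)
Definition NHG (k m : nat) (EH : rel 'I_k) (G : rel 'I_m) : R :=
  (nAut EH)%:R^-1 * \sum_(s : {ffun 'I_k -> 'I_m} | injectiveb s) MH EH G s.

(* T(H,G) for a sample X : {ffun 'I_m -> bool} (X_v = 1 iff v sampled) *)
Definition THG (k m : nat) (EH : rel 'I_k) (G : rel 'I_m) (X : {ffun 'I_m -> bool}) : R :=
  (nAut EH)%:R^-1 * \sum_(s : {ffun 'I_k -> 'I_m} | injectiveb s)
     MH EH G s * \prod_(u : 'I_k) (X (s u))%:R.

Definition hatN (k m : nat) (EH : rel 'I_k) (G : rel 'I_m) (p : R) (X : {ffun 'I_m -> bool}) : R :=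
  (p ^+ k)^-1 * THG EH G X.

Definition Pr_sample (m : nat) (p : R) (E : pred {ffun 'I_m -> bool}) : R :=
  \sum_(X : {ffun 'I_m -> bool} | E X) \prod_(v : 'I_m) (if X v then p else 1 - p).

Definition tH (k m : nat) (EH : rel 'I_k) (G : rel 'I_m) (A : {set 'I_m}) : R :=
  (nAut EH)%:R^-1 * \sum_(s : {ffun 'I_k -> 'I_m} | injectiveb s && (A \subset [set s i | i : 'I_k]))
     MH EH G s.

End Defs.

(* The injective maps s : V(H) -> V(G) form a family of vertex sets
   S_s (the image of s, of size |V(H)|) with weights w_s = M_H(s) / |Aut H|, so that
   N(H,G) = sum_s w_s, t_H(A) = sum_{A <= S_s} w_s, and Z = hatN / N is the
   nonnegative, mean-one variable N^-1 sum_s w_s p^-|S_s| 1{S_s sampled}; nothing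
   else about graphs is used.
   Sufficiency: call s light when t_H(A) <= eta p^|A| N for all nonempty A <= S_s.
   The light part of Z has variance at most 2^|V(H)| eta (Chebyshev), and the other
   copies have total weight at most the tail sum of the condition (Markov).
   Necessity: pick a minimal family F of heavy sets A with total local count at least
   eta N, and let E be the event that some member of F is sampled.  Minimality and
   p_n <= pb < 1 give P(E) <= (1 + pb) / 2.  Copies containing a member of F carry
   weight at least eta N / 2^|V(H)| and are fully sampled only on E, while the Harris
   inequality makes every other copy positively correlated with E; hence
   E[(Z - 1) 1_E] stays bounded below, which Z -> 1 in probability forbids because
   Z >= 0 and E[Z] = 1. *)

From HB Require Import structures.
From mathcomp Require Import all_boot all_order all_algebra all_fingroup.
From mathcomp Require Import all_classical all_reals all_analysis.
From mathcomp Require Import ring lra.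
Import Order.TTheory GRing.Theory Num.Theory.
Set Implicit Arguments. Unset Strict Implicit. Unset Printing Implicit Defensive.
Local Open Scope classical_set_scope.
Local Open Scope ring_scope.

Lemma ler_sum_subpred (R : numDomainType) (T : finType) (P1 P2 : pred T) (F : T -> R) :
  subpred P1 P2 -> (forall x, P2 x -> 0 <= F x) ->
  \sum_(x | P1 x) F x <= \sum_(x | P2 x) F x.
Proof.
move=> P12 F0; rewrite [leRHS](bigID P1) /=.
have -> : \sum_(x | P2 x && P1 x) F x = \sum_(x | P1 x) F x.
  by apply: eq_bigl => x; apply/andP/idP => [[]//|P1x]; rewrite P12.
by rewrite lerDl; apply: sumr_ge0 => x /andP[/F0].
Qed.

Section BernoulliSampling.
Variables (R : realType) (m : nat) (p : R).
Local Notation sample := {ffun 'I_m -> bool}.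

Definition sample_weight (X : sample) : R := \prod_v (if X v then p else 1 - p).
Definition expect (f : sample -> R) : R := \sum_X sample_weight X * f X.
Definition sampled (A : {set 'I_m}) (X : sample) : bool := A \subset finset X.

Lemma Pr_sample_expect (Q : pred sample) : Pr_sample p Q = expect (fun X => (Q X)%:R).
Proof.
by rewrite /Pr_sample /expect big_mkcond; apply: eq_bigr => X _; case: (Q X); rewrite ?mulr1 ?mulr0.
Qed.

Lemma eq_expect (f g : sample -> R) : f =1 g -> expect f = expect g.
Proof. by move=> fg; apply: eq_bigr => X _; rewrite fg. Qed.

Lemma expectD f g : expect (fun X => f X + g X) = expect f + expect g.
Proof. by rewrite /expect -big_split; apply: eq_bigr => X _; rewrite mulrDr. Qed.

Lemma expectZ c f : expect (fun X => c * f X) = c * expect f.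
Proof. by rewrite /expect mulr_sumr; apply: eq_bigr => X _; rewrite mulrCA. Qed.

Lemma expectB f g : expect (fun X => f X - g X) = expect f - expect g.
Proof. by rewrite /expect -sumrB; apply: eq_bigr => X _; rewrite mulrBr. Qed.

Lemma expect_sum (I : finType) (P : pred I) (F : I -> sample -> R) :
  expect (fun X => \sum_(i | P i) F i X) = \sum_(i | P i) expect (F i).
Proof. by rewrite /expect; under eq_bigr do rewrite mulr_sumr; rewrite exchange_big. Qed.

Lemma sum_prod_ffun (g : 'I_m -> bool -> R) :
  \sum_(X : sample) \prod_v g v (X v) = \prod_v (g v true + g v false).
Proof.
rewrite -(bigA_distr_bigA (fun v b => g v b)) /=.
by apply: eq_bigr => v _; rewrite big_bool.
Qed.

Lemma natr_sampled (A : {set 'I_m}) (X : sample) :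
  (sampled A X)%:R = \prod_v (if v \in A then (X v)%:R else 1) :> R.
Proof.
rewrite -big_mkcond /sampled.
have [/fintype.subsetP AX|/fintype.subsetPn[v vA]] := boolP (A \subset finset X).
  by rewrite big1 // => v /AX; rewrite inE => ->.
by rewrite inE => /negbTE Xv; rewrite (bigD1 v) //= Xv mul0r.
Qed.

Lemma expect_sampled (A : {set 'I_m}) : expect (fun X => (sampled A X)%:R) = p ^+ #|A|.
Proof.
rewrite /expect; under eq_bigr do rewrite natr_sampled /sample_weight -big_split /=.
rewrite (sum_prod_ffun (fun v b => (if b then p else 1 - p) * (if v \in A then b%:R else 1))).
rewrite -(prodr_const (mem A)) [RHS]big_mkcond /=; apply: eq_bigr => v _.
by case: (v \in A); rewrite /= ?mulr1 ?mulr0 ?addr0 // addrC subrK.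
Qed.

Lemma sampled0 X : sampled finset.set0 X.
Proof. exact: finset.sub0set. Qed.

Lemma expect_cst c : expect (fun _ => c) = c.
Proof.
have := expect_sampled finset.set0; rewrite cards0 expr0 => E1.
by rewrite -[RHS]mulr1 -E1 -expectZ; apply: eq_expect => X; rewrite sampled0 mulr1.
Qed.

Lemma expect_sqr_centered f a : expect f = a ->
  expect (fun X => (f X - a) ^+ 2) = expect (fun X => f X ^+ 2) - a ^+ 2.
Proof.
move=> Ef; rewrite (eq_expect (g := fun X => f X ^+ 2 + (- (2 * a) * f X + a ^+ 2))).
  by rewrite !expectD expectZ Ef expect_cst; ring.
by move=> X; ring.
Qed.

Lemma sampledU A B X : sampled A X && sampled B X = sampled (A :|: B) X.
Proof. by rewrite /sampled finset.subUset. Qed.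

Lemma sampledS (A B : {set 'I_m}) X : A \subset B -> sampled B X -> sampled A X.
Proof. exact: fintype.subset_trans. Qed.

Lemma natr_sampledU A B X :
  (sampled A X)%:R * (sampled B X)%:R = (sampled (A :|: B) X)%:R :> R.
Proof. by rewrite -natrM mulnb sampledU. Qed.

Definition increasing (Q : pred sample) :=
  forall X Y : sample, (forall v, X v -> Y v) -> Q X -> Q Y.

Lemma sampled_increasing A : increasing (sampled A).
Proof.
move=> X Y XY /fintype.subset_trans; apply; apply/fintype.subsetP => v.
by rewrite !inE; exact: XY.
Qed.

Lemma increasingI Q1 Q2 : increasing Q1 -> increasing Q2 ->
  increasing (fun X => Q1 X && Q2 X).
Proof. by move=> inc1 inc2 X Y XY /andP[/(inc1 _ _ XY) -> /(inc2 _ _ XY)]. Qed.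

Definition sampled_any (F : {set {set 'I_m}}) (X : sample) : bool :=
  [exists A in F, sampled A X].

Lemma sampled_any_increasing F : increasing (sampled_any F).
Proof.
move=> X Y XY /existsP[A /andP[AF AX]]; apply/existsP; exists A.
by rewrite AF (sampled_increasing XY AX).
Qed.

Definition toggle (u : 'I_m) (X : sample) : sample :=
  [ffun v => if v == u then ~~ X v else X v].

Lemma toggleK u : involutive (toggle u).
Proof. by move=> X; apply/ffunP => v; rewrite !ffunE; case: eqP => // _; rewrite negbK. Qed.

Lemma sample_weight_toggle u (X : sample) : X u ->
  p * sample_weight (toggle u X) = (1 - p) * sample_weight X.
Proof.
move=> Xu; rewrite /sample_weight (bigD1 u) //= [in RHS](bigD1 u) //= ffunE eqxx Xu /=.
rewrite mulrCA; congr (_ * (_ * _)).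
by apply: eq_bigr => v /negbTE vu; rewrite ffunE vu.
Qed.

Hypothesis p01 : 0 <= p <= 1.

Lemma sample_weight_ge0 X : 0 <= sample_weight X.
Proof.
by case/andP: p01 => p0 p1; apply: prodr_ge0 => v _; case: (X v); rewrite ?subr_ge0.
Qed.

Lemma ler_expect f g : (forall X, f X <= g X) -> expect f <= expect g.
Proof. by move=> fg; apply: ler_sum => X _; apply: ler_wpM2l (fg X); exact: sample_weight_ge0. Qed.

Lemma Pr_sample_ge0 (Q : pred sample) : 0 <= Pr_sample p Q.
Proof. by apply: sumr_ge0 => X _; exact: sample_weight_ge0. Qed.

(* Toggling [u] maps {Q, ~~ X u} injectively into {Q, X u}, as [Q] is increasing,
   and rescales weights by (1 - p) / p. *)
Lemma harris1 (Q : pred sample) u : increasing Q ->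
  p * Pr_sample p Q <= Pr_sample p (fun X => Q X && X u).
Proof.
move=> incQ; rewrite /Pr_sample (bigID (fun X : sample => X u)) /= mulrDr.
set S1 := \sum_(X | Q X && X u) _.
suff bad_le : p * \sum_(X | Q X && ~~ X u) sample_weight X <= (1 - p) * S1.
  by apply: le_trans (lerD (lexx (p * S1)) bad_le) _; rewrite -mulrDl subrKC mul1r.
rewrite (reindex_inj (inv_inj (toggleK u))) /= mulr_sumr /S1 mulr_sumr.
have toggle_u Y : toggle u Y u = ~~ Y u by rewrite ffunE eqxx.
under eq_bigl => Y do rewrite toggle_u negbK.
under eq_bigr => Y /andP[_ Yu] do rewrite (sample_weight_toggle Yu).
apply: ler_sum_subpred => [Y /andP[QfY Yu]|Y _]; last first.
  apply: mulr_ge0; last exact: sample_weight_ge0.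
  by case/andP: p01 => _; rewrite subr_ge0.
rewrite Yu andbT; apply: incQ QfY => v; rewrite ffunE.
by case: eqP => [->|//] _; exact: Yu.
Qed.

Lemma harris (Q : pred sample) (A : {set 'I_m}) : increasing Q ->
  p ^+ #|A| * Pr_sample p Q <= Pr_sample p (fun X => Q X && sampled A X).
Proof.
have p0 : 0 <= p by case/andP: p01.
move nA: #|A| => n; elim: n A Q nA => [|n IH] A Q nA incQ.
  move/eqP: nA; rewrite cards_eq0 => /eqP ->; rewrite expr0 mul1r.
  by rewrite [leRHS](eq_bigl Q) // => X; rewrite sampled0 andbT.
have [u uA] : exists u, u \in A by apply/set0Pn; rewrite -card_gt0 nA.
have nAu : #|A :\ u| = n by move: nA; rewrite (cardsD1 u) uA add1n => -[].
have incQA := increasingI incQ (sampled_increasing (A := A :\ u)).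
rewrite exprS -mulrA.
apply: le_trans (ler_wpM2l p0 (IH _ Q nAu incQ)) _; apply: le_trans (harris1 u incQA) _.
rewrite [leRHS](eq_bigl (fun X => Q X && sampled (A :\ u) X && X u)) // => X.
rewrite -andbA; congr (_ && _).
rewrite -[in LHS](finset.setD1K uA) -sampledU andbC; congr (_ && _).
by rewrite /sampled finset.sub1set inE.
Qed.

Lemma Pr_sampled_any_le F : Pr_sample p (sampled_any F) <= \sum_(A in F) p ^+ #|A|.
Proof.
rewrite Pr_sample_expect (eq_bigr _ (fun A _ => esym (expect_sampled A))) -expect_sum.
apply: ler_expect => X; case: (boolP (sampled_any F X)) => [/existsP[A /andP[AF AX]]|_].
  by rewrite (bigD1 A) //= AX lerDl; apply: sumr_ge0 => B _; exact: ler0n.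
by apply: sumr_ge0 => B _; exact: ler0n.
Qed.

End BernoulliSampling.

Lemma minimal_subset_sum_ge (R : realDomainType) (T : finType) (f : T -> R) (c : R)
    (F : {set T}) :
  0 < c -> c <= \sum_(x in F) f x ->
  exists F' : {set T}, exists2 x, x \in F' &
    [/\ F' \subset F, c <= \sum_(y in F') f y & \sum_(y in F' :\ x) f y < c].
Proof.
move=> c0; move nF: #|F| => n; elim: n F nF => [|n IH] F nF c_le.
  move/eqP: nF; rewrite cards_eq0 => /eqP F0; move: c_le.
  by rewrite F0 big_set0 => /(lt_le_trans c0); rewrite ltxx.
have [/existsP[x /andP[xF c_le']]|] := boolP [exists x in F, c <= \sum_(y in F :\ x) f y].
  have nFx : #|F :\ x| = n by move: nF; rewrite (cardsD1 x) xF add1n => -[].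
  have [F' [y yF' [F'_sub c_le'' lt_c]]] := IH _ nFx c_le'.
  by exists F', y => //; split=> //; exact: fintype.subset_trans F'_sub (finset.subsetDl _ _).
move/existsPn => min_F; have [x xF] : exists x, x \in F.
  by apply/set0Pn; rewrite -card_gt0 nF.
by exists F, x => //; split=> //; move: (min_F x); rewrite xF ltNge.
Qed.

Section WeightedFamily.
Variables (R : realType) (m : nat) (I : finType) (w : I -> R) (S : I -> {set 'I_m}).
Variables (p : R) (k : nat).
Hypothesis w_ge0 : forall i, 0 <= w i.
Hypothesis p01 : 0 < p < 1.
Hypothesis S_le : forall i, (#|S i| <= k)%N.
Local Notation sample := {ffun 'I_m -> bool}.

Definition total_weight : R := \sum_i w i.
Definition local_weight (A : {set 'I_m}) : R := \sum_(i | A \subset S i) w i.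
Definition weight_frac (P : pred I) : R := total_weight^-1 * \sum_(i | P i) w i.
Definition ht_part (P : pred I) (X : sample) : R :=
  total_weight^-1 * \sum_(i | P i) w i * p ^- #|S i| * (sampled (S i) X)%:R.
Definition ht_ratio : sample -> R := ht_part predT.
Definition heavy (eps : R) (A : {set 'I_m}) : bool :=
  (1 <= #|A| <= k)%N && (eps * p ^+ #|A| * total_weight < local_weight A).
Definition heavy_mass (eps : R) : R := \sum_(A | heavy eps A) local_weight A.

Local Notation N := total_weight.
Hypothesis N_gt0 : 0 < N.

Lemma heavy_mass_mkcond (eps : R) :
  \sum_(A : {set 'I_m} | (1 <= #|A| <= k)%N)
     local_weight A * ((eps * p ^+ #|A| * N < local_weight A)%R)%:R = heavy_mass eps.
Proof.
rewrite /heavy_mass /heavy [RHS]big_mkcondr /=; apply: eq_bigr => A _.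
by case: ifP; rewrite ?mulr1 ?mulr0.
Qed.

Lemma p_gt0 : 0 < p. Proof. by case/andP: p01. Qed.
Lemma p_le1 : p <= 1. Proof. by case/andP: p01 => _ /ltW. Qed.
Lemma p_in01 : 0 <= p <= 1. Proof. by rewrite ltW ?p_gt0 ?p_le1. Qed.
Lemma exprp_gt0 n : 0 < p ^+ n. Proof. exact: exprn_gt0 p_gt0. Qed.
Lemma exprp_neq0 n : p ^+ n != 0. Proof. by rewrite gt_eqF ?exprp_gt0. Qed.
Lemma invN_ge0 : 0 <= N^-1. Proof. by rewrite invr_ge0 ltW. Qed.

Lemma local_weight_ge0 A : 0 <= local_weight A. Proof. exact: sumr_ge0. Qed.

Lemma heavy_mass_ge0 eps : 0 <= heavy_mass eps.
Proof. by apply: sumr_ge0 => A _; exact: local_weight_ge0. Qed.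

Lemma weight_frac_ge0 P : 0 <= weight_frac P.
Proof. exact: mulr_ge0 invN_ge0 (sumr_ge0 _ _). Qed.

Lemma weight_fracC P : weight_frac P + weight_frac (predC P) = 1.
Proof.
rewrite -mulrDr (_ : _ + _ = N) ?mulVf ?gt_eqF //.
by rewrite [N](bigID P).
Qed.

Lemma ht_part_ge0 P X : 0 <= ht_part P X.
Proof.
apply: mulr_ge0 invN_ge0 (sumr_ge0 _ _) => i _.
by rewrite !mulr_ge0 ?ler0n // invr_ge0 ltW ?exprp_gt0.
Qed.

Lemma ht_ratio_split P X : ht_ratio X = ht_part P X + ht_part (predC P) X.
Proof. by rewrite /ht_ratio /ht_part (bigID P) mulrDr. Qed.

Lemma expect_ht_part P : expect p (ht_part P) = weight_frac P.
Proof.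
rewrite expectZ expect_sum; congr (_ * _); apply: eq_bigr => i _.
by rewrite expectZ expect_sampled mulfVK ?exprp_neq0.
Qed.

Lemma expect_ht_ratio : expect p ht_ratio = 1.
Proof. by rewrite expect_ht_part /weight_frac mulVf ?gt_eqF. Qed.

Lemma sum_subsets_le i (P : pred {set 'I_m}) (c : R) : 0 <= c ->
  (forall A, P A -> A \subset S i) -> \sum_(A | P A) c <= (2 ^ k)%:R * c.
Proof.
move=> c0 PS; apply: le_trans (_ : \sum_(A in powerset (S i)) c <= _).
  by apply: ler_sum_subpred => // A /PS; rewrite powersetE.
rewrite sumr_const card_powerset mulr_natl.
by apply: (ler_wpMn2l c0); rewrite leq_exp2l.
Qed.

Lemma invpX_sub1_le (C : {set 'I_m}) :
  p ^- #|C| - 1 <= \sum_(A | (A != finset.set0) && (A \subset C)) p ^- #|A|.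
Proof.
have pinv_ge0 (A : {set 'I_m}) : 0 <= p ^- #|A| by rewrite invr_ge0 ltW ?exprp_gt0.
have [->|nC] := eqVneq C finset.set0.
  by rewrite cards0 expr0 invr1 subrr; apply: sumr_ge0 => A _.
rewrite (bigD1 C) /= ?nC ?subxx //; apply: lerD => //.
by apply: (@le_trans _ _ 0); [rewrite oppr_le0 ler01 | apply: sumr_ge0].
Qed.

Lemma expect_ht_part_sqr P : expect p (fun X => ht_part P X ^+ 2) =
  N^-1 ^+ 2 * \sum_(i | P i) \sum_(j | P j) w i * w j * p ^- #|S i :&: S j|.
Proof.
have pX_union i j : p ^+ #|S i :|: S j| = p ^+ #|S i| * p ^+ #|S j| / p ^+ #|S i :&: S j|.
  by rewrite -exprD -cardsUI exprD mulfK ?exprp_neq0.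
transitivity (expect p (fun X => N^-1 ^+ 2 * \sum_(i | P i) \sum_(j | P j)
   (w i * p ^- #|S i| * (w j * p ^- #|S j|)) * (sampled (S i :|: S j) X)%:R)).
  apply: eq_expect => X; rewrite /ht_part exprMn; congr (_ * _); rewrite expr2 mulr_suml.
  apply: eq_bigr => i _; rewrite mulr_sumr; apply: eq_bigr => j _.
  by rewrite -natr_sampledU; ring.
rewrite expectZ expect_sum; congr (_ * _); apply: eq_bigr => i _.
rewrite expect_sum; apply: eq_bigr => j _; rewrite expectZ expect_sampled pX_union.
by field; rewrite !exprp_neq0.
Qed.

Section LightIndices.
Variable eta : R.
Hypothesis eta_ge0 : 0 <= eta.

Definition light (i : I) : bool :=
  [forall A : {set 'I_m}, (A != finset.set0) && (A \subset S i) ==>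
     (local_weight A <= eta * p ^+ #|A| * N)].

Lemma light_overlap_le i : light i ->
  \sum_j w j * (p ^- #|S i :&: S j| - 1) <= (2 ^ k)%:R * (eta * N).
Proof.
move=> /forallP light_i.
pose sub_i A := (A != finset.set0) && (A \subset S i).
apply: le_trans (_ : \sum_(A | sub_i A) eta * N <= _); last first.
  by apply: (@sum_subsets_le i) => [|A /andP[]//]; exact: mulr_ge0 eta_ge0 (ltW N_gt0).
apply: le_trans (_ : \sum_j w j *
    \sum_(A | (A != finset.set0) && (A \subset S i :&: S j)) p ^- #|A| <= _).
  by apply: ler_sum => j _; apply: ler_wpM2l => //; exact: invpX_sub1_le.
under eq_bigr do rewrite mulr_sumr.
rewrite (exchange_big_dep sub_i) /=; last first.
  by move=> j A _ /andP[nA]; rewrite finset.subsetI /sub_i nA => /andP[->].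
apply: ler_sum => A /andP[nA sA].
have -> : \sum_(j | (A != finset.set0) && (A \subset S i :&: S j)) w j * p ^- #|A|
    = local_weight A * p ^- #|A|.
  by rewrite /local_weight mulr_suml; apply: eq_bigl => j; rewrite nA finset.subsetI sA.
move: (light_i A); rewrite nA sA /= => tA_le.
by rewrite ler_pdivrMr ?exprp_gt0 // mulrAC.
Qed.

Lemma variance_ht_light :
  expect p (fun X => (ht_part light X - weight_frac light) ^+ 2) <= (2 ^ k)%:R * eta.
Proof.
rewrite expect_sqr_centered ?expect_ht_part // expect_ht_part_sqr.
have -> : weight_frac light ^+ 2 =
    N^-1 ^+ 2 * \sum_(i | light i) \sum_(j | light j) w i * w j.
  rewrite /weight_frac exprMn; congr (_ * _).
  by rewrite expr2 mulr_suml; apply: eq_bigr => i _; rewrite mulr_sumr.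
rewrite -mulrBr -sumrB.
have -> : \sum_(i | light i) (\sum_(j | light j) w i * w j * p ^- #|S i :&: S j|
      - \sum_(j | light j) w i * w j)
    = \sum_(i | light i) w i * \sum_(j | light j) w j * (p ^- #|S i :&: S j| - 1).
  by apply: eq_bigr => i _; rewrite -sumrB mulr_sumr; apply: eq_bigr => j _; ring.
have bound_ge0 : 0 <= (2 ^ k)%:R * (eta * N).
  by rewrite mulr_ge0 ?ler0n // mulr_ge0 // ltW.
apply: le_trans (_ : N^-1 ^+ 2 * \sum_i w i * ((2 ^ k)%:R * (eta * N)) <= _).
  apply: ler_wpM2l; first by rewrite exprn_ge0 ?invN_ge0.
  rewrite [leRHS](bigID light) /= -[leLHS]addr0 lerD //; last first.
    by apply: sumr_ge0 => i _; rewrite mulr_ge0.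
  apply: ler_sum => i light_i; apply: ler_wpM2l => //.
  apply: le_trans (light_overlap_le light_i).
  apply: ler_sum_subpred => // j _.
  apply: mulr_ge0 => //; rewrite subr_ge0 invf_ge1 ?exprp_gt0 //.
  exact: exprn_ile1 (ltW p_gt0) p_le1.
rewrite -mulr_suml -/N (_ : _ * (N * _) = (2 ^ k)%:R * eta) //.
by field; rewrite gt_eqF.
Qed.

Lemma weight_frac_heavy_le : weight_frac (predC light) <= N^-1 * heavy_mass eta.
Proof.
apply: ler_wpM2l; first exact: invN_ge0.
rewrite /heavy_mass /local_weight (exchange_big_dep predT) //= [leLHS]big_mkcond /=.
apply: ler_sum => i _; case: ifPn => [/forallPn[A]|_]; last by apply: sumr_ge0.
rewrite negb_imply -ltNge => /andP[/andP[nA sA] tA_gt].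
rewrite (bigD1 A) /=; last first.
  by rewrite sA andbT /heavy tA_gt card_gt0 nA (leq_trans (subset_leq_card sA)).
by rewrite lerDl; apply: sumr_ge0.
Qed.

End LightIndices.

(* Chebyshev for [u] and Markov for [y + b], both at threshold d / 3, in pointwise form. *)
Lemma deviation_split_le (d u y b : R) : 0 < d -> 0 <= u -> 0 <= y -> 0 <= b ->
  d < u + y + b -> 1 <= 9 / d ^+ 2 * u ^+ 2 + 3 / d * (y + b).
Proof.
move=> d0 u0 y0 b0 d_lt.
have : d ^+ 2 <= 9 * u ^+ 2 + 3 * d * (y + b).
  have : 0 <= d * (u + y + b - d).
    by apply: mulr_ge0; [exact: ltW | rewrite subr_ge0; exact: ltW].
  have : 0 <= (3 * u - d / 2) ^+ 2 by exact: sqr_ge0.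
  nra.
have -> : 9 / d ^+ 2 * u ^+ 2 + 3 / d * (y + b) = (9 * u ^+ 2 + 3 * d * (y + b)) / d ^+ 2.
  by field; rewrite gt_eqF.
by rewrite ler_pdivlMr ?exprn_gt0 // mul1r.
Qed.

Lemma Pr_deviation_le (delta eta : R) : 0 < delta -> 0 <= eta ->
  Pr_sample p (fun X => delta < `|ht_ratio X - 1|) <=
  9 / delta ^+ 2 * ((2 ^ k)%:R * eta) + 6 / delta * (N^-1 * heavy_mass eta).
Proof.
move=> d0 eta0.
set Zg := ht_part (light eta); set Zb := ht_part (predC (light eta)).
set ag := weight_frac (light eta); set bg := weight_frac (predC (light eta)).
have c9 : 0 <= 9 / delta ^+ 2 by rewrite divr_ge0 ?exprn_ge0 ?ltW.
have c3 : 0 <= 3 / delta by rewrite divr_ge0 ?ltW.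
have bg0 : 0 <= bg := weight_frac_ge0 _.
rewrite Pr_sample_expect.
apply: le_trans (_ : expect p (fun X => 9 / delta ^+ 2 * (Zg X - ag) ^+ 2 +
     3 / delta * (Zb X + bg)) <= _).
  apply: (ler_expect p_in01) => X; have Zb0 : 0 <= Zb X := ht_part_ge0 _ X.
  case: (boolP (delta < _)) => [dev|_] /=; last first.
    by apply: addr_ge0; apply: mulr_ge0 => //; [exact: sqr_ge0 | exact: addr_ge0].
  rewrite -(real_normK (num_real (Zg X - ag))).
  apply: deviation_split_le => //; apply: lt_le_trans dev _.
  rewrite (ht_ratio_split (light eta)) -(weight_fracC (light eta)) -/Zg -/Zb -/ag -/bg.
  have -> : Zg X + Zb X - (ag + bg) = (Zg X - ag) + Zb X - bg by ring.
  apply: le_trans (ler_normB _ _) _; rewrite (ger0_norm bg0) lerD2r.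
  by apply: le_trans (ler_normD _ _) _; rewrite (ger0_norm Zb0).
rewrite expectD !expectZ expectD expect_ht_part expect_cst -/bg.
have := variance_ht_light eta0; have := weight_frac_heavy_le eta.
rewrite -/Zg -/ag -/bg => hb hv.
have := ler_wpM2l c9 hv; have := ler_wpM2l c3 (lerD hb hb).
rewrite (_ : 6 / delta = 3 / delta * 2); last by field; rewrite gt_eqF.
move: (N^-1 * heavy_mass eta) => Bd; lra.
Qed.

(* As E[Z - 1] = 0, E[(Z - 1) 1_Q] = E[(1 - Z) 1_{~~ Q}], and 1 - Z <= 1. *)
Lemma expect_ht_dev_event_le (Q : pred {ffun 'I_m -> bool}) (delta : R) : 0 < delta ->
  expect p (fun X => (ht_ratio X - 1) * (Q X)%:R) <=
  delta + Pr_sample p (fun X => delta < `|ht_ratio X - 1|).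
Proof.
move=> d0.
have -> : expect p (fun X => (ht_ratio X - 1) * (Q X)%:R) =
    expect p (fun X => (1 - ht_ratio X) * (1 - (Q X)%:R)).
  transitivity (expect p (fun X => (ht_ratio X - 1) + (1 - ht_ratio X) * (1 - (Q X)%:R))).
    by apply: eq_expect => X; ring.
  by rewrite expectD expectD expect_ht_ratio expect_cst subrr add0r.
rewrite Pr_sample_expect -[X in _ <= X + _](@expect_cst _ m p) -expectD.
apply: (ler_expect p_in01) => X; have Z0 := ht_part_ge0 predT X.
case: (Q X) => /=; first by rewrite subrr mulr0 addr_ge0 ?ler0n ?ltW.
rewrite subr0 mulr1; case: ltP => [_|dev] /=; first by rewrite /ht_ratio; lra.
by rewrite addr0 (le_trans _ dev) // distrC ler_norm.
Qed.

Definition covers (F : {set {set 'I_m}}) (i : I) : bool := [exists A in F, A \subset S i].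

Lemma sum_local_weight_le_covers (F : {set {set 'I_m}}) :
  \sum_(A in F) local_weight A <= (2 ^ k)%:R * \sum_(i | covers F i) w i.
Proof.
rewrite /local_weight (exchange_big_dep predT) //= mulr_sumr [leRHS]big_mkcond /=.
apply: ler_sum => i _; case: ifP => [_|/negbT/existsPn F_i].
  by apply: (@sum_subsets_le i) => // A /andP[].
by rewrite big1 // => A /andP[AF AS]; move: (F_i A); rewrite AF AS.
Qed.

Lemma expect_ht_sampled_any_ge (F : {set {set 'I_m}}) :
  Pr_sample p (sampled_any F) + weight_frac (covers F) * (1 - Pr_sample p (sampled_any F))
    <= expect p (fun X => ht_ratio X * (sampled_any F X)%:R).
Proof.
set PE := Pr_sample p (sampled_any F).
have -> : expect p (fun X => ht_ratio X * (sampled_any F X)%:R) = N^-1 *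
    \sum_i w i * p ^- #|S i| * Pr_sample p (fun X => sampled_any F X && sampled (S i) X).
  transitivity (expect p (fun X => N^-1 * \sum_i w i * p ^- #|S i| *
      (sampled_any F X && sampled (S i) X)%:R)).
    apply: eq_expect => X; rewrite /ht_ratio /ht_part -mulrA mulr_suml; congr (_ * _).
    by apply: eq_bigr => i _; rewrite andbC -mulnb natrM mulrA.
  rewrite expectZ expect_sum; congr (_ * _); apply: eq_bigr => i _.
  by rewrite expectZ Pr_sample_expect.
have term_ge i : w i * (if covers F i then 1 else PE) <=
    w i * p ^- #|S i| * Pr_sample p (fun X => sampled_any F X && sampled (S i) X).
  rewrite -mulrA; apply: ler_wpM2l => //; rewrite ler_pdivlMl ?exprp_gt0 //.
  case: ifP => [/existsP[A /andP[AF AS]]|_]; last first.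
    exact: (harris p_in01 (S i) (sampled_any_increasing (F := F))).
  rewrite mulr1 -expect_sampled Pr_sample_expect; apply: (ler_expect p_in01) => X.
  case SX: (sampled (S i) X); rewrite ?andbF ?andbT //.
  suff -> : sampled_any F X by [].
  by apply/existsP; exists A; rewrite AF (sampledS AS SX).
apply: le_trans (_ : N^-1 * \sum_i w i * (if covers F i then 1 else PE) <= _); last first.
  by apply: ler_wpM2l; [exact: invN_ge0 | exact: ler_sum].
have -> : \sum_i w i * (if covers F i then 1 else PE) =
    PE * N + (1 - PE) * \sum_(i | covers F i) w i.
  rewrite [in RHS]big_mkcond /= mulr_sumr /total_weight mulr_sumr -big_split /=.
  by apply: eq_bigr => i _; case: (covers F i); ring.
rewrite /weight_frac; set Wc := \sum_(i | covers F i) w i.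
by rewrite (_ : N^-1 * (PE * N + _) = PE + N^-1 * Wc * (1 - PE)) //; field; rewrite gt_eqF.
Qed.

Lemma covers_frac_le_deviation (F : {set {set 'I_m}}) (delta : R) : 0 < delta ->
  weight_frac (covers F) * (1 - Pr_sample p (sampled_any F)) <=
  delta + Pr_sample p (fun X => delta < `|ht_ratio X - 1|).
Proof.
move=> d0; move: (expect_ht_dev_event_le (sampled_any F) d0) (expect_ht_sampled_any_ge F).
have -> : expect p (fun X => (ht_ratio X - 1) * (sampled_any F X)%:R) =
    expect p (fun X => ht_ratio X * (sampled_any F X)%:R) - Pr_sample p (sampled_any F).
  by rewrite Pr_sample_expect -expectB; apply: eq_expect => X; ring.
lra.
Qed.

Lemma sum_pX_heavy_le (eps eta pb : R) (F : {set {set 'I_m}}) (B : {set 'I_m}) :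
  0 < eps -> p <= pb -> eta <= eps * (1 - pb) / 2 -> {subset F <= heavy eps} -> B \in F ->
  \sum_(A in F :\ B) local_weight A < eta * N ->
  \sum_(A in F) p ^+ #|A| <= pb + (1 - pb) / 2.
Proof.
move=> e0 p_le eta_le F_heavy BF lt_eta.
rewrite (big_setD1 B BF) /=; apply: lerD.
  have /andP[/andP[B_ge1 _] _] := F_heavy B BF.
  rewrite -(prednK B_ge1) exprS; apply: le_trans p_le.
  by apply: ler_piMr; [exact: ltW p_gt0 | exact: exprn_ile1 (ltW p_gt0) p_le1].
have eN : 0 < eps * N by exact: mulr_gt0.
apply: le_trans (_ : \sum_(A in F :\ B) local_weight A / (eps * N) <= _).
  apply: ler_sum => A; rewrite in_setD1 => /andP[_ AF]; rewrite ler_pdivlMr //.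
  by have /andP[_ /ltW] := F_heavy A AF; rewrite mulrCA mulrA.
rewrite -mulr_suml; apply: le_trans (_ : eta * N / (eps * N) <= _).
  by rewrite ler_pM2r ?invr_gt0 // ltW.
rewrite (_ : eta * N / (eps * N) = eta / eps); last by field; rewrite !gt_eqF.
by rewrite ler_pdivrMr // mulrC mulrA.
Qed.

Lemma deviation_ge_heavy_mass (eps pb theta delta : R) :
  0 < eps -> p <= pb -> pb < 1 -> 0 < theta -> theta <= N^-1 * heavy_mass eps -> 0 < delta ->
  Num.min theta (eps * (1 - pb) / 2) / (2 ^ k)%:R * ((1 - pb) / 2)
    <= delta + Pr_sample p (fun X => delta < `|ht_ratio X - 1|).
Proof.
move=> e0 p_le pb1 th0 th_le d0.
set eta := Num.min theta _.
have eta0 : 0 < eta by rewrite lt_min th0 !mulr_gt0 ?subr_gt0.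
have K0 : 0 < (2 ^ k)%:R :> R by rewrite ltr0n expn_gt0.
have mass_ge : eta * N <= \sum_(A in [set A | heavy eps A]%SET) local_weight A.
  rewrite (eq_bigl (heavy eps)) => [|A]; last by rewrite inE.
  by rewrite -ler_pdivlMr // mulrC (le_trans _ th_le) // /eta ge_min lexx.
have [F [B BF [F_sub ge_eta lt_eta]]] := minimal_subset_sum_ge (mulr_gt0 eta0 N_gt0) mass_ge.
have F_heavy : {subset F <= heavy eps} by move=> A /(fintype.subsetP F_sub); rewrite inE.
set PE := Pr_sample p (sampled_any F).
have PE_le : PE <= pb + (1 - pb) / 2.
  apply: le_trans (Pr_sampled_any_le p_in01 F) (sum_pX_heavy_le e0 p_le _ F_heavy BF lt_eta).
  by rewrite /eta ge_min lexx orbT.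
have cover_ge : eta / (2 ^ k)%:R <= weight_frac (covers F).
  rewrite ler_pdivrMr // /weight_frac -mulrA ler_pdivlMl // [leLHS]mulrC [leRHS]mulrC.
  exact: le_trans ge_eta (sum_local_weight_le_covers F).
have dev_ge := covers_frac_le_deviation F d0; rewrite -/PE in dev_ge.
have frac_ge0 : 0 <= (1 - pb) / 2 by rewrite divr_ge0 // subr_ge0 ltW.
have PE_compl : (1 - pb) / 2 <= 1 - PE by lra.
have := ler_pM (divr_ge0 (ltW eta0) (ltW K0)) frac_ge0 cover_ge PE_compl.
lra.
Qed.

End WeightedFamily.

Lemma limn_esup_lt_eventually_le (R : realType) (u : nat -> R) (l : R) :
  (limn_esup (fun n => (u n)%:E) < l%:E)%E ->
  exists2 b : R, b < l & \forall n \near \oo, u n <= b.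
Proof.
move=> lim_lt.
have [n0 sup_lt] : exists n0, (esups (fun n => (u n)%:E) n0 < l%:E)%E.
  apply/not_existsP => sup_ge.
  have : (l%:E <= limn (esups (fun n => (u n)%:E)))%E.
    by apply: lime_ge; [exact: is_cvg_esups | near=> n; rewrite leNgt; apply/negP].
  by rewrite -limn_esup_lim leNgt lim_lt.
have ub n : (n0 <= n)%N -> ((u n)%:E <= esups (fun n => (u n)%:E) n0)%E.
  by move=> n0n; apply: ereal_sup_ubound; exists n.
move: sup_lt ub; case: (esups _ n0) => [r| |] //= r_lt ub.
  exists r; first by rewrite -lte_fin.
  by near=> n; rewrite -lee_fin; apply: ub; near: n; exists n0.
by have := ub n0 (leqnn _); rewrite leeNy_eq.
Unshelve. all: by end_near.
Qed.

Section Asymptotics.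
Variables (R : realType) (k : nat) (m : nat -> nat) (I : nat -> finType).
Variables (w : forall n, I n -> R) (S : forall n, I n -> {set 'I_(m n)}) (p : nat -> R).
Arguments w : clear implicits.
Arguments S : clear implicits.
Hypothesis w_ge0 : forall n i, 0 <= w n i.
Hypothesis p01 : forall n, 0 < p n < 1.
Hypothesis S_le : forall n i, (#|S n i| <= k)%N.
Hypothesis N_gt0 : forall n, 0 < total_weight (w n).
Arguments w_ge0 : clear implicits.
Arguments S_le : clear implicits.

Local Notation Z n := (ht_ratio (w n) (S n) (p n)).
Local Notation heavy_frac n eps := ((total_weight (w n))^-1 * heavy_mass (w n) (S n) (p n) k eps).

Lemma ht_consistent_of_heavy_frac :
  (forall eps : R, 0 < eps -> (fun n => heavy_frac n eps) @ \oo --> 0) ->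
  forall delta : R, 0 < delta ->
    (fun n => Pr_sample (p n) (fun X => delta < `|Z n X - 1|)) @ \oo --> 0.
Proof.
move=> heavy0 delta d0; apply/cvgrPdist_lt => e e0.
have K0 : 0 < (2 ^ k)%:R :> R by rewrite ltr0n expn_gt0.
set eta := e * delta ^+ 2 / (18 * (2 ^ k)%:R).
have eta0 : 0 < eta by rewrite !(divr_gt0, mulr_gt0) ?exprn_gt0.
have ed0 : 0 < e * delta / 12 by rewrite !(divr_gt0, mulr_gt0).
move/cvgrPdist_lt: (heavy0 _ eta0) => /(_ _ ed0); apply: filterS => n.
rewrite sub0r normrN => heavy_small.
rewrite sub0r normrN ger0_norm ?(Pr_sample_ge0 (p_in01 (p01 n))) //.
have := Pr_deviation_le (w_ge0 n) (p01 n) (S_le n) (N_gt0 n) d0 (ltW eta0).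
have -> : 9 / delta ^+ 2 * ((2 ^ k)%:R * eta) = e / 2 by rewrite /eta; field; rewrite !gt_eqF.
have : 6 / delta * heavy_frac n eta < e / 2.
  rewrite (_ : e / 2 = 6 / delta * (e * delta / 12)); last by field; rewrite gt_eqF.
  by rewrite ltr_pM2l ?divr_gt0 // (le_lt_trans (ler_norm _) heavy_small).
lra.
Qed.

Lemma heavy_frac_vanishing_of_ht_consistent (pb : R) :
  pb < 1 -> (\forall n \near \oo, p n <= pb) ->
  (forall delta : R, 0 < delta ->
    (fun n => Pr_sample (p n) (fun X => delta < `|Z n X - 1|)) @ \oo --> 0) ->
  forall eps : R, 0 < eps -> (fun n => heavy_frac n eps) @ \oo --> 0.
Proof.
move=> pb1 p_le dev0 eps e0; apply/cvgrPdist_lt => e e0'.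
have K0 : 0 < (2 ^ k)%:R :> R by rewrite ltr0n expn_gt0.
set c := Num.min e (eps * (1 - pb) / 2) / (2 ^ k)%:R * ((1 - pb) / 2).
have min0 : 0 < Num.min e (eps * (1 - pb) / 2).
  by rewrite lt_min e0' !(mulr_gt0, divr_gt0) // subr_gt0.
have c0 : 0 < c by rewrite /c !(mulr_gt0, divr_gt0) // subr_gt0.
have c2 : 0 < c / 2 by rewrite divr_gt0.
move/cvgrPdist_lt: (dev0 _ c2) => /(_ _ c2) dev_small.
near=> n.
have : `|0 - Pr_sample (p n) (fun X => c / 2 < `|Z n X - 1|)| < c / 2 by near: n.
rewrite sub0r normrN ger0_norm ?(Pr_sample_ge0 (p_in01 (p01 n))) // => Pr_small.
rewrite sub0r normrN ger0_norm ?mulr_ge0 ?heavy_mass_ge0 ?invr_ge0 ?ltW //.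
rewrite ltNge; apply/negP => e_le.
have := deviation_ge_heavy_mass (w_ge0 n) (p01 n) (S_le n) (N_gt0 n) e0 _ pb1 e0' e_le c2.
rewrite -/c; have -> : p n <= pb by near: n.
lra.
Unshelve. all: by end_near.
Qed.

End Asymptotics.

Section SubgraphCopies.
Variables (R : realType) (k m : nat) (EH : rel 'I_k) (G : rel 'I_m).

Definition copy_weight (s : {ffun 'I_k -> 'I_m}) : R :=
  (nAut EH)%:R^-1 * ((injectiveb s)%:R * MH R EH G s).

Definition copy_vertices (s : {ffun 'I_k -> 'I_m}) : {set 'I_m} := [set s i | i : 'I_k].

Lemma copy_weight_ge0 s : 0 <= copy_weight s.
Proof.
rewrite mulr_ge0 ?invr_ge0 ?mulr_ge0 //.
by apply: prodr_ge0 => i _; apply: prodr_ge0 => j _; rewrite /adj ler0n.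
Qed.

Lemma card_copy_vertices_le s : (#|copy_vertices s| <= k)%N.
Proof. by rewrite (leq_trans (leq_imset_card _ _)) // card_ord. Qed.

Lemma NHG_total_weight : NHG R EH G = total_weight copy_weight.
Proof.
rewrite /NHG /total_weight -mulr_sumr big_mkcond /=; congr (_ * _).
by apply: eq_bigr => s _; case: (injectiveb s); rewrite ?mul1r ?mul0r.
Qed.

Lemma tH_local_weight A : tH R EH G A = local_weight copy_weight copy_vertices A.
Proof.
rewrite /tH /local_weight -mulr_sumr big_mkcond /= [in RHS]big_mkcond /=; congr (_ * _).
apply: eq_bigr => s _; rewrite /copy_vertices.
by case: (injectiveb s); rewrite /= ?mul1r ?mul0r //; case: ifP.
Qed.

Lemma hatN_ht_ratio (p : R) X :
  hatN EH G p X / NHG R EH G = ht_ratio copy_weight copy_vertices p X.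
Proof.
rewrite /hatN /THG /ht_ratio /ht_part -NHG_total_weight mulrC; congr (_ * _).
rewrite mulrA mulr_sumr big_mkcond /=; apply: eq_bigr => s _.
rewrite /copy_weight; case: ifP => [/injectiveP s_inj|_]; last by rewrite mul0r mulr0 !mul0r.
have -> : #|copy_vertices s| = k by rewrite (card_imset _ s_inj) card_ord.
have -> : \prod_u ((X (s u))%:R : R) = (sampled (copy_vertices s) X)%:R.
  by rewrite natr_sampled -big_mkcond big_imset //=; apply: in2W.
by rewrite mul1r; ring.
Qed.

End SubgraphCopies.

Theorem theorem2p2 (R : realType) (k : nat) (EH : rel 'I_k)
  (m : nat -> nat) (G : forall n : nat, rel 'I_(m n)) (p : nat -> R) :
  (0 < k)%N ->
  simple_graph EH -> connected_graph EH ->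
  (forall n, simple_graph (G n)) ->
  ((fun n => (m n)%:R : R) @ \oo --> +oo) ->
  (forall n, 0 < NHG R EH (G n)) ->
  (forall n, 0 < p n < 1) ->
  (limn_esup (fun n => (p n)%:E) < 1%:E)%E ->
  ((forall eps : R, 0 < eps ->
      (fun n => Pr_sample (p n)
         (fun X => eps < `| hatN EH (G n) (p n) X / NHG R EH (G n) - 1 |)) @ \oo --> 0)
   <->
   (forall eps : R, 0 < eps ->
      (fun n => (NHG R EH (G n))^-1 *
         \sum_(A : {set 'I_(m n)} | (1 <= #|A| <= k)%N)
            tH R EH (G n) A *
            ((eps * p n ^+ #|A| * NHG R EH (G n) < tH R EH (G n) A)%R)%:R) @ \oo --> 0)).
Proof.
move=> _ _ _ _ _ NHG_gt0 p01 limsup_p.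
have [pb pb1 p_le] := limn_esup_lt_eventually_le limsup_p.
pose w n := copy_weight R EH (G n); pose S n := @copy_vertices k (m n).
have N_gt0 n : 0 < total_weight (w n) by rewrite -NHG_total_weight.
have w_ge0 n : forall s, 0 <= w n s := @copy_weight_ge0 _ _ _ _ _.
have S_le n : forall s, (#|S n s| <= k)%N := @card_copy_vertices_le _ _.
have eP (eps : R) : (fun n => Pr_sample (p n)
    (fun X => eps < `|hatN EH (G n) (p n) X / NHG R EH (G n) - 1|)) =
    (fun n => Pr_sample (p n) (fun X => eps < `|ht_ratio (w n) (S n) (p n) X - 1|)).
  by apply/funext => n; apply: eq_bigl => X; rewrite hatN_ht_ratio.
have eB (eps : R) : (fun n => (NHG R EH (G n))^-1 *
    \sum_(A : {set 'I_(m n)} | (1 <= #|A| <= k)%N) tH R EH (G n) A *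
      ((eps * p n ^+ #|A| * NHG R EH (G n) < tH R EH (G n) A)%R)%:R) =
    (fun n => (total_weight (w n))^-1 * heavy_mass (w n) (S n) (p n) k eps).
  apply/funext => n; rewrite -heavy_mass_mkcond NHG_total_weight.
  by under eq_bigr do rewrite tH_local_weight.
split=> [dev0 eps e0|heavy0 delta d0].
  rewrite eB; apply: (heavy_frac_vanishing_of_ht_consistent w_ge0 p01 S_le N_gt0 pb1 p_le) e0.
  by move=> delta d0; rewrite -eP; exact: dev0.
rewrite eP; apply: (ht_consistent_of_heavy_frac w_ge0 p01 S_le N_gt0) d0.
by move=> eps e0; rewrite -eB; exact: heavy0.
Qed.
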